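(* Let $X$ be convex and let $f$ be $\alpha$-robustly quasiconvex for some $\alpha>0$, with $X\subset\operatorname{dom}f$. If $X^\infty\cap\mathcal{K}_q(f)=\{0\}$, then there exists $\varepsilon>0$ such that for all $u\in\mathbb{B}_\varepsilon$: (a) $f_u$ is bounded from below on $X$; (b) $\mathrm{Sol}(u)$ is nonempty and compact. Moreover, (c) $\operatorname{Lim\,sup}_{u\to0}\mathrm{Sol}(u)\subset\mathrm{Sol}(0)$ and (d) $\mathrm{Sol}(\cdot)$ is upper semicontinuous at $0$.
   Context: Standing assumptions: $f:\mathbb{R}^n\to\mathbb{R}\cup\{\pm\infty\}$ is proper (never $-\infty$ and finite at some point) and lower semicontinuous; $X\subset\mathbb{R}^n$ is a nonempty closed set with $\operatorname{dom}f\cap X$ unbounded. $f$ is $\alpha$-robustly quasiconvex ($\alpha\ge0$) if $x\mapsto f(x)+\langle u,x\rangle$ is quasiconvex for every $u\in\mathbb{B}_\alpha$, where $g$ quasiconvex means $g(\lambda x+(1-\lambda)y)\le\max\{g(x),g(y)\}$ for $x,y\in\operatorname{dom}g$, $\lambda\in[0,1]$; $\mathbb{B}_\alpha$ is the open ball of radius $\alpha$ centered at $0$. $X^\infty=\{u:\exists t_k\to+\infty,\ \exists x_k\in X,\ x_k/t_k\to u\}$. $f^\infty_q(u)=\sup_{x\in\operatorname{dom}f}\sup_{t>0}\frac{f(x+tu)-f(x)}{t}$, $\mathcal{K}_q(f)=\{d: f^\infty_q(d)\le0\}$. $f_u(x)=f(x)-\langle u,x\rangle$, $\mathrm{Sol}(u)=\{x\in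 X: f_u(x)\le f_u(y)\ \forall y\in X\}$. $\operatorname{Lim\,sup}_{u\to0}\mathrm{Sol}(u)$ is the set of $\bar x$ for which there exist $u_k\to0$, $x_k\in\mathrm{Sol}(u_k)$, $x_k\to\bar x$. A set-valued map $F$ is upper semicontinuous at $\bar u$ if for every open $V\supset F(\bar u)$ there is a neighborhood $U$ of $\bar u$ with $F(u)\subset V$ for all $u\in U$. *)

From HB Require Import structures.
From mathcomp Require Import all_boot all_order all_algebra.
From mathcomp Require Import all_classical all_reals all_analysis.
Set Implicit Arguments. Unset Strict Implicit. Unset Printing Implicit Defensive.
Import Order.TTheory GRing.Theory Num.Theory.
Import numFieldNormedType.Exports.
Local Open Scope classical_set_scope.
Local Open Scope ring_scope.

Section Defs.
Context {R : realType} {n : nat}.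
Notation V := 'rV[R]_n.

Definition dotp (u x : V) : R := \sum_(i < n) u ord0 i * x ord0 i.
Definition eucnorm (x : V) : R := Num.sqrt (\sum_(i < n) x ord0 i ^+ 2).

Definition eball0 (a : R) : set V := [set u | eucnorm u < a].

Definition dom (f : V -> \bar R) : set V := [set x | (f x < +oo)%E].

Definition proper_fun (f : V -> \bar R) : Prop :=
  (forall x, f x != -oo%E) /\ (exists x, f x \is a fin_num).

Definition quasiconvex (g : V -> \bar R) : Prop :=
  forall x y (l : R), dom g x -> dom g y -> 0 <= l <= 1 ->
    (g (l *: x + (1 - l) *: y)%R <= maxe (g x) (g y))%E.

Definition robustly_quasiconvex (alpha : R) (f : V -> \bar R) : Prop :=
  forall u, eball0 alpha u -> quasiconvex (fun x => f x + (dotp u x)%:E)%E.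

Definition cvx_set (X : set V) : Prop :=
  forall x y (l : R), X x -> X y -> 0 <= l <= 1 -> X (l *: x + (1 - l) *: y).

Definition bounded_eset (A : set V) : Prop :=
  exists M : R, forall x, A x -> eucnorm x <= M.

Definition asymp_cone (X : set V) : set V :=
  [set u | exists (t : nat -> R) (x : nat -> V),
      t @ \oo --> +oo /\ (forall k, X (x k)) /\
      (fun k => (t k)^-1 *: x k) @ \oo --> u].

Definition qasymp (f : V -> \bar R) (u : V) : \bar R :=
  ereal_sup [set z | exists x t, dom f x /\ 0 < t /\
      z = ((f (x + t *: u)%R - f x) * (t^-1)%:E)%E].

Definition Kq (f : V -> \bar R) : set V := [set d | (qasymp f d <= 0)%E].

Definition fu (f : V -> \bar R) (u : V) (x : V) : \bar R :=
  (f x - (dotp u x)%:E)%E.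

Definition Sol (f : V -> \bar R) (X : set V) (u : V) : set V :=
  [set x | X x /\ forall y, X y -> (fu f u x <= fu f u y)%E].

Definition limsup_Sol0 (f : V -> \bar R) (X : set V) : set V :=
  [set xb | exists (u : nat -> V) (x : nat -> V),
      u @ \oo --> (0 : V) /\ (forall k, Sol f X (u k) (x k)) /\
      x @ \oo --> xb].

Definition usc_at (F : V -> set V) (ub : V) : Prop :=
  forall W : set V, open W -> F ub `<=` W ->
    \forall u \near ub, F u `<=` W.

End Defs.

From HB Require Import structures.
From mathcomp Require Import all_boot all_order all_algebra.
From mathcomp Require Import all_classical all_reals all_analysis.
From mathcomp Require Import lra.
Import Order.TTheory GRing.Theory Num.Theory.
Import numFieldNormedType.Exports.
Local Open Scope classical_set_scope.
Local Open Scope ring_scope.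

(* Everything rests on coercivity.  If f were not coercive on X, there would be
   x_k in X with |x_k| -> +oo and f (x_k) = o(|x_k|); a cluster point d of
   x_k / |x_k| lies in X^oo, and quasiconvexity of the tilts f - <b d, .> along
   the segments [x_k, y] gives f (y + s d) <= f y + b s |d|^2 for all small
   b > 0, so d lies in K_q(f), hence d = 0, although |d| = 1.  A coercivity
   bound f x > delta |x| survives small tilts u, so the sublevel sets
   {f_u <= f_u x0} for small u all lie in one compact subset of X: the
   Weierstrass theorem for the lower semicontinuous f_u gives (a) and (b),
   lower semicontinuity of f gives (c), and compactness turns (c) into (d). *)

Lemma lte_dense_fin (R : realFieldType) (r s : \bar R) :
  (r < s)%E -> exists a : R, (r < a%:E < s)%E.
Proof.
case: r => [x||]; case: s => [y||] //=.
- rewrite lte_fin => xy; exists ((x + y) / 2); rewrite !lte_fin.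
  by apply/andP; split; lra.
- by move=> _; exists (x + 1); rewrite lte_fin ltry andbT; lra.
- by move=> _; exists (y - 1); rewrite lte_fin ltNyr /=; lra.
- by move=> _; exists 0; rewrite ltNyr ltry.
Qed.

Section LowerSemicontinuous.
Context {T : topologicalType} {R : realType}.
Implicit Types (g : T -> \bar R).

Lemma lsc_cluster_le {g} {F : set_system T} {x} {r : \bar R} :
  lower_semicontinuous g -> cluster F x ->
  (forall a : R, (r < a%:E)%E -> F [set y | (g y < a%:E)%E]) -> (g x <= r)%E.
Proof.
move=> lg Fx gF; rewrite leNgt; apply/negP => /lte_dense_fin[a /andP[ra ag]].
have [W Wx aW] := lg x a ag.
have [y [/= gya /aW agy]] := Fx _ _ (gF a ra) Wx.
by move: (lt_trans gya agy); rewrite ltxx.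
Qed.

Lemma lsc_cvg_le {g} {F : set_system T} {PF : ProperFilter F} {x} {r : \bar R} :
  lower_semicontinuous g -> F --> x ->
  (forall a : R, (r < a%:E)%E -> F [set y | (g y < a%:E)%E]) -> (g x <= r)%E.
Proof.
move=> lg Fx; apply: lsc_cluster_le => // A B FA /Fx FB.
exact: filter_ex (filterI FA FB).
Qed.

Lemma closed_lsc_le {g} (b : \bar R) :
  lower_semicontinuous g -> closed [set x | (g x <= b)%E].
Proof.
move=> lg; have -> : [set x | (g x <= b)%E] = ~` [set x | (b < g x)%E].
  by apply/seteqP; split => x /=; rewrite leNgt => /negP.
apply: open_closedC; rewrite openE => x /= /lte_dense_fin[a /andP[ba ag]].
have [W Wx aW] := lg x a ag; apply: filterS Wx => y /aW.
exact: lt_trans ba.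
Qed.

Lemma lsc_subEFin {g} {h : T -> R} : lower_semicontinuous g -> continuous h ->
  lower_semicontinuous (fun x => g x - (h x)%:E)%E.
Proof.
move=> lg ch x a agh.
have : ((a + h x)%:E < g x)%E.
  move: agh; case: (g x) => [r||] //= agh; last exact: ltry.
  by rewrite lte_fin; rewrite -EFinB lte_fin in agh; lra.
move=> /lte_dense_fin[b /andP[ahb bg]]; rewrite lte_fin in ahb.
have [W Wx bW] := lg x b bg.
exists (W `&` [set y | h y < b - a]).
  by apply: filterI Wx _; apply: (@cvgr_lt _ _ _ _ h (h x) (ch x)); lra.
move=> y [/bW + /= hy]; case: (g y) => [r||] //= bry; last exact: ltry.
by rewrite -EFinB lte_fin; rewrite lte_fin in bry; lra.
Qed.

Lemma lsc_compact_argmin {g} {K : set T} :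
  lower_semicontinuous g -> compact K -> K !=set0 ->
  exists2 x, K x & forall y, K y -> (g x <= g y)%E.
Proof.
move=> lg cK [x0 Kx0]; set m := ereal_inf (g @` K).
(* a minimizer is a cluster point of the strict sublevel sets above [m] *)
have mle y : K y -> (m <= g y)%E by move=> Ky; apply: ereal_inf_lbound; exists y.
have [moo|moo] := eqVneq m +oo%E.
  exists x0 => // y /mle; rewrite moo leye_eq => /eqP ->; exact: leey.
pose F := filter_from [set a | (m < a)%E] (fun a => K `&` [set x | (g x < a)%E]).
have FF : ProperFilter F.
  apply: filter_from_proper; last first.
    by move=> a /ereal_inf_lt[_ [x Kx <-] gxa]; exists x.
  apply: filter_from_filter; first by exists +oo%E; rewrite /= ltey.
  move=> a b ma mb; exists (Order.min a b); first by rewrite /= lt_min ma.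
  by move=> x [Kx]; rewrite /= lt_min => /andP[xa xb].
have FK : F K by exists +oo%E; [rewrite /= ltey | move=> x []].
have [xb [Kxb clxb]] := cK F FF FK.
exists xb => // y Ky; apply: le_trans (mle y Ky).
by apply: (lsc_cluster_le lg clxb) => a ma; exists a%:E => // x [].
Qed.

End LowerSemicontinuous.

Lemma cvg_subseq {T : topologicalType} {u : nat -> T} {phi : nat -> nat} {l : T} :
  (forall j, (j <= phi j)%N) -> u @ \oo --> l -> (u \o phi) @ \oo --> l.
Proof.
move=> phige ul A /ul[N _ uA]; exists N => // j /= Nj.
exact/uA/(leq_trans Nj).
Qed.

Lemma cluster_subseq_cvg {R : realType} {V : normedModType R} {w : nat -> V} {d} :
  cluster (w @ \oo) d ->
  exists2 phi : nat -> nat, (forall j, (j <= phi j)%N) & (w \o phi) @ \oo --> d.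
Proof.
move=> wd.
have near_d j : exists k, (j <= k)%N /\ `|d - w k| < j.+1%:R^-1.
  have tail_j : (w @ \oo) [set w k | k in [set k | (j <= k)%N]].
    by exists j => // k /= jk; exists k.
  have ball_j : nbhs d (ball d j.+1%:R^-1) by apply: nbhsx_ballx; rewrite invr_gt0.
  have [_ [[k jk <-]]] := wd _ _ tail_j ball_j.
  by rewrite -ball_normE => dk; exists k.
have [phi phiP] := choice near_d.
exists phi => [j|]; first by case: (phiP j).
apply/cvgrPdist_lt => e e0; near=> j; apply: lt_trans (phiP j).2 _.
by near: j; exact: near_infty_natSinv_lt (PosNum e0).
Unshelve. all: by end_near.
Qed.

Section Euclidean.
Context {R : realType} {n : nat}.
Local Notation V := 'rV[R]_n.
Implicit Types (u v x y : V).

(* [`|x|] is the max norm of ['rV[R]_n], which carries the topology; the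
   Euclidean norm only enters through the ball [eball0]. *)

Lemma dotpDr u x y : dotp u (x + y) = dotp u x + dotp u y.
Proof. by rewrite /dotp -big_split; apply: eq_bigr => i _; rewrite mxE mulrDr. Qed.

Lemma dotpZr a u x : dotp u (a *: x) = a * dotp u x.
Proof. by rewrite /dotp mulr_sumr; apply: eq_bigr => i _; rewrite mxE mulrCA. Qed.

Lemma dotpBr u x y : dotp u (x - y) = dotp u x - dotp u y.
Proof. by rewrite dotpDr -scaleN1r dotpZr mulN1r. Qed.

Lemma dotpZl a u x : dotp (a *: u) x = a * dotp u x.
Proof. by rewrite /dotp mulr_sumr; apply: eq_bigr => i _; rewrite mxE mulrA. Qed.

Lemma dotp0l x : dotp 0 x = 0.
Proof. by rewrite -(scale0r 0) dotpZl mul0r. Qed.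

Lemma normr_entry_le x i : `|x ord0 i| <= `|x|.
Proof.
rewrite [leRHS]/Num.norm /= mx_normrE; apply/bigmax_geP; right => /=.
by exists (ord0, i).
Qed.

Lemma normr_dotp_le u x : `|dotp u x| <= n%:R * (`|u| * `|x|).
Proof.
apply: le_trans (ler_norm_sum _ _ _) _.
have -> : n%:R * (`|u| * `|x|) = \sum_(i < n) `|u| * `|x|.
  by rewrite sumr_const card_ord mulr_natl.
apply: ler_sum => i _.
by rewrite normrM; apply: ler_pM => //; exact: normr_entry_le.
Qed.

Lemma dotpp_gt0 {x} : x != 0 -> 0 < dotp x x.
Proof.
move=> x0; rewrite lt_def sumr_ge0 ?andbT => [|i _]; last by rewrite -expr2 sqr_ge0.
apply: contra x0 => /eqP/psumr_eq0P x_eq0; apply/eqP/rowP => i.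
rewrite mxE; apply/eqP; rewrite -sqrf_eq0 expr2; apply/eqP/x_eq0 => // j _.
by rewrite -expr2 sqr_ge0.
Qed.

Lemma eucnormE x : eucnorm x = Num.sqrt (dotp x x).
Proof. by rewrite /eucnorm /dotp; under eq_bigr do rewrite expr2. Qed.

Lemma eucnormZ a x : eucnorm (a *: x) = `|a| * eucnorm x.
Proof.
by rewrite !eucnormE dotpZl dotpZr mulrA -expr2 sqrtrM ?sqr_ge0 // sqrtr_sqr.
Qed.

Lemma normr_le_eucnorm x : `|x| <= eucnorm x.
Proof.
have [->|x0] := eqVneq `|x| 0; first exact: sqrtr_ge0.
have [[i j] /= xij] := mx_norm_neq0 x0.
have -> : `|x| = `|x i j| by exact: xij.
rewrite (ord1 i) -sqrtr_sqr /eucnorm; apply: ler_wsqrtr.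
by rewrite (bigD1 j) //= lerDl; apply: sumr_ge0 => k _; exact: sqr_ge0.
Qed.

Lemma dotp_continuous u : continuous (dotp u).
Proof.
move=> x; apply/(@cvgrPdist_lt _ _ _ (nbhs x)) => e e0.
have c0 : 0 < n%:R * `|u| + 1 by rewrite ltr_pwDr // mulr_ge0.
near=> y; rewrite -dotpBr; apply: le_lt_trans (normr_dotp_le _ _) _.
have : ball x (e / (n%:R * `|u| + 1)) y.
  by near: y; apply: nbhsx_ballx; rewrite divr_gt0.
rewrite -ball_normE /= ltr_pdivlMr // => xy; apply: le_lt_trans xy.
by rewrite mulrA mulrC ler_wpM2l // lerDl.
Unshelve. all: by end_near.
Qed.

Lemma dotp_cvg0 {us vs : nat -> V} {v} : us @ \oo --> (0 : V) -> vs @ \oo --> v ->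
  dotp (us k) (vs k) @[k --> \oo] --> 0.
Proof.
move=> u0 vv; apply/norm_cvg0P.
apply: (@squeeze_cvgr _ _ _ _ (fun=> 0) (fun k => n%:R * (`|us k| * `|vs k|))).
- by near=> k; rewrite normr_ge0 normr_dotp_le.
- exact: cvg_cst.
- rewrite -[X in _ --> X](mulr0 (n%:R : R)) -[X in _ * X](mul0r `|v|).
  apply: cvgM; first exact: cvg_cst.
  by apply: cvgM; [exact/norm_cvg0P | exact: cvg_norm].
Unshelve. all: by end_near.
Qed.

Lemma compact_normr_le r : compact [set x : V | `|x| <= r].
Proof.
apply: bounded_closed_compact.
  exists r; split; first exact: num_real.
  by move=> M rM x /= xr; apply: le_trans xr (ltW rM).
exact: (continuous_closedP _).1 (@norm_continuous _ V) _ (@closed_le _ r).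
Qed.

Lemma compact_unit_sphere : compact [set x : V | `|x| = 1].
Proof.
apply: (@subclosed_compact _ _ [set x : V | `|x| <= 1]).
- exact: (continuous_closedP _).1 (@norm_continuous _ V) _ (@closed_eq _ 1).
- exact: compact_normr_le.
- by move=> x /= ->.
Qed.

End Euclidean.

Section Asymptotic.
Context {R : realType} {n : nat}.
Local Notation V := 'rV[R]_n.
Context {f : V -> \bar R}.
Hypothesis pf : proper_fun f.
Hypothesis lf : lower_semicontinuous f.

Lemma fin_num_dom {x} : dom f x -> f x \is a fin_num.
Proof. by move=> fx; rewrite fin_numE pf.1 (lt_eqF fx). Qed.

Lemma fin_num_fu u {x} : dom f x -> fu f u x \is a fin_num.
Proof. by move=> /fin_num_dom fx; rewrite /fu -(fineK fx) -EFinB. Qed.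

Lemma lsc_fu u : lower_semicontinuous (fu f u).
Proof. by apply: lsc_subEFin => //; exact: dotp_continuous. Qed.

Lemma Kq_of_descent d :
  (forall y s, dom f y -> 0 < s -> (f (y + s *: d) <= f y)%E) -> Kq f d.
Proof.
move=> desc; apply: ge_ereal_sup => _ [y [s [Dy [s0 ->]]]].
by apply: mule_le0_ge0; [rewrite sube_le0; exact: desc | rewrite lee_fin invr_ge0 ltW].
Qed.

Section Robust.
Context {alpha : R}.
Hypothesis alpha_gt0 : 0 < alpha.
Hypothesis rq : robustly_quasiconvex alpha f.

Lemma quasiconvex_fu u : eucnorm u < alpha -> quasiconvex (fu f u).
Proof.
move=> ua; have := rq (- u).
have -> : (fun x => f x + (dotp (- u) x)%:E)%E = fu f u.
  by apply/funext => x; rewrite /fu -scaleN1r dotpZl mulN1r EFinN.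
by apply; rewrite /eball0 /= -scaleN1r eucnormZ normrN normr1 mul1r.
Qed.

Section Ray.
Context {x : nat -> V} {t : nat -> R} {d : V}.
Hypothesis x_dom : forall j, dom f (x j).
Hypothesis t_oo : t @ \oo --> +oo.
Hypothesis f_sublinear :
  forall c, 0 < c -> \forall j \near \oo, (f (x j) <= (c * t j)%:E)%E.
Hypothesis x_dir : (fun j => (t j)^-1 *: x j) @ \oo --> d.
Hypothesis d_neq0 : d != 0.

Lemma fu_dir_cvgNy v (r : R) : 0 < dotp v d ->
  \forall j \near \oo, (fu f v (x j) <= r%:E)%E.
Proof.
set e := dotp v d => e0.
have vw : \forall j \near \oo, e / 2 < dotp v ((t j)^-1 *: x j).
  by apply: (cvgr_gt e (continuous_cvg _ (dotp_continuous v d) x_dir)); lra.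
have tge := (cvgryPge t).1 t_oo (Num.max 1 (4 * `|r| / e)).
near=> j.
have /andP[t1 tr] : (1 <= t j) && (4 * `|r| / e <= t j).
  by rewrite -ge_max; near: j; exact: tge.
have fx : fine (f (x j)) <= e / 4 * t j.
  rewrite -lee_fin fineK ?fin_num_dom //; near: j.
  by apply: f_sublinear; rewrite divr_gt0.
have wv : e / 2 < dotp v ((t j)^-1 *: x j) by near: j; exact: vw.
have t0 : 0 < t j by apply: lt_le_trans t1.
rewrite /fu -(fineK (fin_num_dom (x_dom j))) -EFinB lee_fin.
have -> : dotp v (x j) = t j * dotp v ((t j)^-1 *: x j).
  by rewrite dotpZr mulrA mulfV ?mul1r // gt_eqF.
have rr : 4 * `|r| <= t j * e by rewrite -ler_pdivrMr.
have : `|r| <= `|r| := lexx _; rewrite ler_norml => /andP[rr' _].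
nra.
Unshelve. all: by end_near.
Qed.

Let seg (s : R) (y : V) j := (s / t j) *: x j + (1 - s / t j) *: y.

Lemma seg_cvg s y : seg s y @ \oo --> y + s *: d.
Proof.
have lam0 : (fun j => s / t j) @ \oo --> 0.
  rewrite -(mulr0 s); apply: cvgM; first exact: cvg_cst.
  by apply/gtr0_cvgV0 => //; exact: (cvgryPgt t).1 t_oo 0.
have -> : seg s y = fun j => s *: ((t j)^-1 *: x j) + (1 - s / t j) *: y.
  by apply/funext => j; rewrite /seg scalerA.
rewrite addrC; apply: cvgD; first exact: cvgZ (cvg_cst s) x_dir.
rewrite -[X in _ --> X](scale1r y) -[X in X *: y](subr0 1).
by apply: cvgZ; [apply: cvgB; [exact: cvg_cst | exact: lam0] | exact: cvg_cst].
Qed.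

(* Along [x_j], the tilt [fu f (b *: d)] tends to -oo, so on the segment
   [[x_j, y]] its quasiconvexity bound is the value at [y]. *)
Lemma f_seg_le {b s : R} {y} : dom f y -> 0 < s -> 0 < b -> b * eucnorm d < alpha ->
  \forall j \near \oo,
    (f (seg s y j) <= f y + (b * (dotp d (seg s y j) - dotp d y))%:E)%E.
Proof.
move=> y_dom s0 b0 bd; set u := b *: d.
have qc : quasiconvex (fu f u).
  by apply: quasiconvex_fu; rewrite eucnormZ gtr0_norm.
have dom_fu v : dom f v -> dom (fu f u) v.
  by move=> /(fin_num_fu u); rewrite /dom /= ltey_eq => ->.
have below_y : \forall j \near \oo, (fu f u (x j) <= fu f u y)%E.
  rewrite -(fineK (fin_num_fu u y_dom)); apply: fu_dir_cvgNy.
  by rewrite /u dotpZl mulr_gt0 // dotpp_gt0.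
near=> j.
have tj : s <= t j by near: j; exact: (cvgryPge t).1 t_oo s.
have l01 : 0 <= s / t j <= 1.
  have t0 : 0 < t j := lt_le_trans s0 tj.
  by rewrite divr_ge0 ?(ltW s0) ?(ltW t0) //= ler_pdivrMr // mul1r.
move: (qc _ _ _ (dom_fu _ (x_dom j)) (dom_fu _ y_dom) l01).
rewrite -/(seg s y j) max_r; last by near: j; exact: below_y.
rewrite /fu /u !dotpZl -(fineK (fin_num_dom y_dom)) mulrBr.
case: (f (seg s y j)) => [r||].
- by rewrite -!EFinB -EFinD !lee_fin; lra.
- by rewrite addye // leye_eq.
- by move=> _; rewrite leNye.
Unshelve. all: by end_near.
Qed.

Lemma ray_descent_tilted {b s : R} {y} : dom f y -> 0 < s -> 0 < b ->
  b * eucnorm d < alpha -> (f (y + s *: d) <= f y + (b * (s * dotp d d))%:E)%E.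
Proof.
move=> y_dom s0 b0 bd.
have fyE : f y = (fine (f y))%:E by rewrite fineK // fin_num_dom.
set F := fine (f y) in fyE *.
have dz : (fun j => F + b * (dotp d (seg s y j) - dotp d y)) @ \oo -->
    F + b * (s * dotp d d).
  have := continuous_cvg _ (dotp_continuous d _) (seg_cvg s y).
  rewrite dotpDr dotpZr => dzc.
  have -> : s * dotp d d = dotp d y + s * dotp d d - dotp d y.
    by rewrite addrAC subrr add0r.
  apply: cvgD; first exact: cvg_cst.
  by apply: cvgM; [exact: cvg_cst | apply: cvgB; [exact: dzc | exact: cvg_cst]].
rewrite fyE -EFinD; apply: (lsc_cvg_le lf (seg_cvg s y)) => a; rewrite lte_fin => ya.
suff : \forall j \near \oo, (f (seg s y j) < a%:E)%E by [].
have f_seg := f_seg_le y_dom s0 b0 bd.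
near=> j.
apply: (@le_lt_trans _ _ (f y + (b * (dotp d (seg s y j) - dotp d y))%:E)%E).
  by near: j.
by rewrite fyE -EFinD lte_fin; near: j; exact: (cvgr_lt _ dz _ ya).
Unshelve. all: by end_near.
Qed.

Lemma ray_descent y s : dom f y -> 0 < s -> (f (y + s *: d) <= f y)%E.
Proof.
move=> y_dom s0; apply/lee_addgt0Pr => eps eps0.
have e0 : 0 < dotp d d := dotpp_gt0 d_neq0.
have nd : 0 <= eucnorm d := sqrtr_ge0 _.
set b := Num.min (alpha / (eucnorm d + 1)) (eps / (s * dotp d d)).
have b0 : 0 < b by rewrite lt_min !divr_gt0 ?mulr_gt0 // ltr_pwDr.
have bd : b * eucnorm d < alpha.
  have : b * (eucnorm d + 1) <= alpha by rewrite -ler_pdivlMr ?ltr_pwDr // ge_min lexx.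
  by rewrite mulrDr mulr1; lra.
have be : b * (s * dotp d d) <= eps.
  by rewrite -ler_pdivlMr ?mulr_gt0 // ge_min lexx orbT.
apply: le_trans (ray_descent_tilted y_dom s0 b0 bd) _.
by apply: leeD2l; rewrite lee_fin.
Qed.

End Ray.

Lemma coercive_of_asymp_cone {X} : X `<=` dom f -> asymp_cone X `&` Kq f = [set 0] ->
  exists2 delta : R, 0 < delta &
    exists r : R, forall x, X x -> r <= `|x| -> ((delta * `|x|)%:E < f x)%E.
Proof.
move=> Xd HK; apply: contrapT => not_coercive.
have escape k : exists x, [/\ X x, k.+1%:R <= `|x| & (f x <= (`|x| / k.+1%:R)%:E)%E].
  apply: contrapT => nx; apply: not_coercive.
  exists k.+1%:R^-1; first by rewrite invr_gt0.
  exists k.+1%:R => x Xx kx; rewrite ltNge; apply/negP => fx.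
  by apply: nx; exists x; split => //; rewrite mulrC.
have [xs xsP] := choice escape.
have xs_gt0 k : 0 < `|xs k| by case: (xsP k) => _ + _; apply: lt_le_trans.
pose w k := `|xs k|^-1 *: xs k.
have w_sphere : \forall k \near \oo, `|w k| = 1.
  by apply: nearW => k; rewrite normrZ ger0_norm ?invr_ge0 // mulVf // gt_eqF.
have [d [/= d1 dcl]] := compact_unit_sphere (w @ \oo) _ w_sphere.
have [phi phige wphi] := cluster_subseq_cvg dcl.
pose t j := `|xs (phi j)|.
have t_oo : t @ \oo --> +oo.
  apply: (ger_cvgy _ cvgr_idn); apply: nearW => j; case: (xsP (phi j)) => _ + _.
  by apply: le_trans; rewrite ler_nat ltnW // ltnS.
have sublin c : 0 < c -> \forall j \near \oo, (f (xs (phi j)) <= (c * t j)%:E)%E.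
  move=> c0; near=> j; case: (xsP (phi j)) => _ _ /le_trans; apply.
  have jc : j.+1%:R^-1 < c by near: j; exact: near_infty_natSinv_lt (PosNum c0).
  rewrite lee_fin [c * _]mulrC ler_wpM2l //; apply: le_trans (ltW jc).
  by rewrite lef_pV2 ?posrE // ler_nat ltnS.
have d0 : d != 0.
  by apply/eqP => d_eq0; move: d1; rewrite d_eq0 normr0 => /esym/eqP; rewrite oner_eq0.
have Kd : Kq f d.
  apply: Kq_of_descent => y s.
  apply: (ray_descent _ t_oo sublin wphi d0) => j.
  by case: (xsP (phi j)) => /Xd.
have : (asymp_cone X `&` Kq f) d.
  by split=> //; exists t, (xs \o phi); split=> //; split=> // j; case: (xsP (phi j)).
by rewrite HK => /= d_eq0; rewrite d_eq0 eqxx in d0.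
Unshelve. all: by end_near.
Qed.

End Robust.

Lemma fu_level_bounded {X x0} {delta r0 : R} : X `<=` dom f -> X x0 -> 0 < delta ->
  (forall x, X x -> r0 <= `|x| -> ((delta * `|x|)%:E < f x)%E) ->
  exists2 eps : R, 0 < eps & exists r : R, forall u x,
    `|u| < eps -> X x -> (fu f u x <= fu f u x0)%E -> `|x| <= r.
Proof.
move=> Xd Xx0 delta0 coer.
have n1 : 0 < n%:R + 1 :> R by rewrite ltr_pwDr.
set eps := delta / 2 / (n%:R + 1).
have eps0 : 0 < eps by rewrite !divr_gt0.
have dotp_small (u y : V) : `|u| < eps -> `|dotp u y| <= delta * `|y| / 2.
  move=> ue; apply: le_trans (normr_dotp_le _ _) _.
  rewrite mulrA [leRHS]mulrAC ler_wpM2r // -(divfK (lt0r_neq0 n1) (delta / 2)) -/eps.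
  have : 0 <= n%:R :> R by []; have : 0 <= `|u| by []; nra.
set M0 := fine (f x0) + delta * `|x0| / 2.
exists eps => //; exists (Num.max r0 (2 * `|M0| / delta)) => u x ue Xx.
rewrite /fu -(fineK (fin_num_dom (Xd _ Xx))) -(fineK (fin_num_dom (Xd _ Xx0))).
rewrite -!EFinB lee_fin => fux; rewrite le_max.
have [r0x|/ltW -> //] := leP r0 `|x|; apply/orP; right.
have := coer x Xx r0x; rewrite -(fineK (fin_num_dom (Xd _ Xx))) lte_fin => fx.
move: (dotp_small u x ue) (dotp_small u x0 ue); rewrite !ler_norml.
move=> /andP[_ ux] /andP[ux0 _]; have := ler_norm M0.
by rewrite {1}/M0 ler_pdivlMr // mulrC; lra.
Qed.

End Asymptotic.

Section Solutions.
Context {R : realType} {n : nat}.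
Local Notation V := 'rV[R]_n.
Context {f : V -> \bar R} {X : set V}.
Hypothesis lf : lower_semicontinuous f.
Hypothesis X_closed : closed X.

Lemma closed_Sol u : closed (Sol f X u).
Proof.
have -> : Sol f X u = X `&` \bigcap_(y in X) [set x | (fu f u x <= fu f u y)%E].
  by apply/seteqP; split => x [Xx xmin]; split => // y Xy; exact: xmin.
apply: closedI X_closed (closed_bigI _) => y _.
by apply: closed_lsc_le; exact: lsc_fu.
Qed.

Section LevelBounded.
Context {u x0 : V} {r : R}.
Hypothesis Xx0 : X x0.
Hypothesis level_bounded :
  forall x, X x -> (fu f u x <= fu f u x0)%E -> `|x| <= r.

Let K := [set x : V | `|x| <= r] `&` X.

Let compact_K : compact K.
Proof. by apply: compact_closedI X_closed; exact: compact_normr_le. Qed.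

Lemma Sol_nonempty : Sol f X u !=set0.
Proof.
have Kx0 : K x0 := conj (level_bounded x0 Xx0 (lexx _)) Xx0.
have [xb [_ Xxb] xbmin] :=
  lsc_compact_argmin (lsc_fu lf u) compact_K (ex_intro _ x0 Kx0).
have xb_x0 := xbmin x0 Kx0.
exists xb; split => // y Xy; have [yx0|/ltW x0y] := leP (fu f u y) (fu f u x0).
  exact: xbmin (conj (level_bounded y Xy yx0) Xy).
exact: le_trans xb_x0 x0y.
Qed.

Lemma compact_Sol : compact (Sol f X u).
Proof.
apply: subclosed_compact (closed_Sol u) compact_K _ => x [Xx xmin].
by split=> //; apply: level_bounded x Xx (xmin x0 Xx0).
Qed.

End LevelBounded.

Lemma limsup_Sol0_sub : proper_fun f -> X `<=` dom f ->
  limsup_Sol0 f X `<=` Sol f X 0.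
Proof.
move=> pf Xd xb [us [xs [u0 [xsS xsxb]]]].
have Xxb : X xb.
  by apply: (closed_cvg _ X_closed _ _ xsxb); apply: nearW => k; case: (xsS k).
split=> // y Xy; rewrite /fu !dotp0l !sube0.
have fyE : f y = (fine (f y))%:E by rewrite fineK // (fin_num_dom pf (Xd _ Xy)).
apply: (lsc_cvg_le lf xsxb) => a; rewrite fyE lte_fin => ya.
have dcv : dotp (us k) (xs k - y) @[k --> \oo] --> 0.
  by apply: (dotp_cvg0 u0); apply: cvgB xsxb (cvg_cst y).
suff : \forall k \near \oo, (f (xs k) < a%:E)%E by [].
near=> k; have [Xk kmin] := xsS k; move: (kmin y Xy).
rewrite /fu fyE -(fineK (fin_num_dom pf (Xd _ Xk))) -!EFinB lee_fin lte_fin.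
have : dotp (us k) (xs k - y) < a - fine (f y).
  by near: k; apply: (cvgr_lt 0 dcv); rewrite subr_gt0.
by rewrite dotpBr; lra.
Unshelve. all: by end_near.
Qed.

End Solutions.

Lemma usc_at0_of_closed_graph {R : realType} {n : nat} (F : 'rV[R]_n -> set 'rV[R]_n)
    (K : set 'rV[R]_n) :
  compact K -> (\forall u \near (0 : 'rV[R]_n), F u `<=` K) ->
  (forall us xs xb, us @ \oo --> (0 : 'rV[R]_n) -> (forall k, F (us k) (xs k)) ->
     xs @ \oo --> xb -> F 0 xb) ->
  usc_at F 0.
Proof.
move=> cK FK F_graph W oW F0W; apply: contrapT => not_near.
have escape k :
    exists u, [/\ `|u| < k.+1%:R^-1, F u `<=` K & exists2 x, F u x & ~ W x].
  apply: contrapT => no_escape; apply: not_near; near=> u => x Fux.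
  apply: contrapT => nWx; apply: no_escape; exists u; split; last by exists x.
    by near: u; apply: (@nbhs0_lt R 'rV[R]_n); rewrite invr_gt0.
  by near: u.
have [us usP] := choice escape.
have xs_ex k : exists x, F (us k) x /\ ~ W x by case: (usP k) => _ _ [x]; exists x.
have [xs xsP] := choice xs_ex.
have xs_K : \forall k \near \oo, K (xs k).
  by apply: nearW => k; case: (usP k) => _ + _; apply; exact: (xsP k).1.
have [xb [_ clxb]] := cK (xs @ \oo) _ xs_K.
have [phi phige xphi] := cluster_subseq_cvg clxb.
have u0 : us @ \oo --> (0 : 'rV[R]_n).
  apply/cvgrPdist_lt => e e0; near=> k; rewrite sub0r normrN.
  case: (usP k) => /lt_trans + _ _; apply.
  by near: k; exact: near_infty_natSinv_lt (PosNum e0).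
have /F0W Wxb := F_graph _ _ _ (cvg_subseq phige u0) (fun j => (xsP (phi j)).1) xphi.
have [N _ xW] := xphi W (open_nbhs_nbhs (conj oW Wxb)).
exact: (xsP (phi N)).2 (xW N (leqnn N)).
Unshelve. all: by end_near.
Qed.

Theorem mainTheorem11 (R : realType) (n : nat)
  (f : 'rV[R]_n -> \bar R) (X : set 'rV[R]_n) (alpha : R) :
  proper_fun f -> lower_semicontinuous f ->
  X !=set0 -> closed X -> ~ bounded_eset (dom f `&` X) ->
  cvx_set X -> 0 < alpha -> robustly_quasiconvex alpha f ->
  X `<=` dom f ->
  asymp_cone X `&` Kq f = [set 0] ->
  exists eps : R, 0 < eps /\
    (forall u, eball0 eps u ->
       (exists m : R, forall x, X x -> (m%:E <= fu f u x)%E) /\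
       Sol f X u !=set0 /\ compact (Sol f X u)) /\
    limsup_Sol0 f X `<=` Sol f X 0 /\
    usc_at (Sol f X) 0.
Proof.
move=> pf lf [x0 Xx0] Xcl _ _ alpha0 rq Xd HK.
have [delta delta0 [r0 coercive]] := coercive_of_asymp_cone pf lf alpha0 rq Xd HK.
have [eps eps0 [r level]] := fu_level_bounded pf Xd Xx0 delta0 coercive.
exists eps; split=> //; split; last split.
- move=> u /(le_lt_trans (normr_le_eucnorm u)) ue.
  have level_u := level u ^~ ue.
  have [xb [Xxb xbmin]] := Sol_nonempty lf Xcl Xx0 level_u.
  split; last split.
  + exists (fine (fu f u xb)) => x Xx.
    by rewrite fineK ?xbmin ?(fin_num_fu pf u (Xd _ Xxb)).
  + by exists xb.
  + exact (compact_Sol lf Xcl Xx0 level_u).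
- exact: limsup_Sol0_sub.
- apply (usc_at0_of_closed_graph _ _ (compact_closedI (compact_normr_le r) Xcl)).
    near=> u => x [Xx xmin]; split; last exact: Xx.
    by apply: (level u x _ Xx (xmin x0 Xx0)); near: u; exact: (@nbhs0_lt R 'rV[R]_n).
  by move=> us xs xb u0 xsS xsxb; apply: limsup_Sol0_sub => //; exists us, xs.
Unshelve. all: by end_near.
Qed.
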